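(* Let $\mathcal{H}_X$ be a Hilbert space of dimension $d$ and $\mathcal{H}_R$ a reference Hilbert space. Let $U$ be a Haar-random target unitary on $\mathcal{H}_X$. Consider sets of training inputs $S_{\mathrm{in}}=\{|\psi_{\max}\rangle,|\psi_2\rangle,\dots,|\psi_t\rangle\}\subset\mathcal{H}_X\otimes\mathcal{H}_R$ where $|\psi_{\max}\rangle$ has Schmidt decomposition $|\psi_{\max}\rangle=\sum_{k=1}^{r_{\max}}\sqrt{c_k}\,|\xi_k\rangle_X|\zeta_k\rangle_R$ (with $r_{\max}$ the maximal Schmidt rank among the inputs), and every other input satisfies $|\psi_j\rangle\in\mathcal{H}_{S_{X,\max}}\otimes\mathcal{H}_R$, where $\mathcal{H}_{S_{X,\max}}=\mathrm{span}\{|\xi_1\rangle,\dots,|\xi_{r_{\max}}\rangle\}$. Let $T_t^{\mathrm{ld}}$ be the set of all such input sets, and let $V_S$ be a hypothesis unitary on $\mathcal{H}_X$ perfectly trained on the corresponding training set $S=\{(|\psi_j\rangle,(U\otimes I)|\psi_j\rangle)\}$. Then, with $\mathbb{E}_S^{\mathrm{ld}}$ denoting the expectation over $T_t^{\mathrm{ld}}$, $$\mathbb{E}_U\big[\mathbb{E}_S^{\mathrm{ld}}[R_U(V_S)]\big]\;\ge\;1-\frac{r_{\max}^2+d+1}{d(d+1)}.$$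
   Context: Perfect training means $|\langle\psi_j|(U^\dagger V_S\otimes I)|\psi_j\rangle|=1$ for all training inputs. The risk is $R_U(V)=\int\big(1-|\langle x|U^\dagger V|x\rangle|^2\big)\,dx$ over Haar-random pure states $|x\rangle\in\mathcal{H}_X$, equivalently $R_U(V)=1-\frac{d+|\mathrm{Tr}[U^\dagger V]|^2}{d(d+1)}$. $\mathbb{E}_U$ is over the Haar measure on $\mathcal{U}(d)$; $\mathbb{E}_S^{\mathrm{ld}}$ is over the normalized restriction of the product Fubini–Study measure to $T_t^{\mathrm{ld}}$. *)

From HB Require Import structures.
From mathcomp Require Import all_boot all_order all_algebra.
From mathcomp Require Import all_classical all_reals all_analysis.
From mathcomp Require Export complex.
Set Implicit Arguments.
Unset Strict Implicit.
Unset Printing Implicit Defensive.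
Import Order.TTheory GRing.Theory Num.Theory.
Local Open Scope ring_scope.
Local Open Scope classical_set_scope.

Section QDefs.
Variable R : realType.
Local Notation C := R[i].
Local Open Scope complex_scope.

(* complex matrices (d x n); a vector of H_X (x) H_R, with dim H_X = d and
   dim H_R = n, is represented as a d x n matrix psi, so that
   (A (x) I) psi = A *m psi, and |xi>_X |zeta>_R = xi *m zeta^T *)
Definition cmx (m n : nat) := 'M[C]_(m, n).
HB.instance Definition _ m n := Choice.on (cmx m n).
HB.instance Definition _ m n := isPointed.Build (cmx m n) (0 : 'M[C]_(m, n)).

Definition cmx_gen m n : set (set (cmx m n)) :=
  [set A | exists (i : 'I_m) (j : 'I_n) (B : set R), measurable B /\
     (A = (fun M : cmx m n => complex.Re (M i j)) @^-1` B \/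
      A = (fun M : cmx m n => complex.Im (M i j)) @^-1` B)].
Definition cmxT m n := g_sigma_algebraType (@cmx_gen m n).

Definition ctuple (t m n : nat) := {ffun 'I_t -> 'M[C]_(m, n)}.
HB.instance Definition _ t m n := Choice.on (ctuple t m n).
HB.instance Definition _ t m n :=
  isPointed.Build (ctuple t m n) [ffun _ => (0 : 'M[C]_(m, n))].
Definition ctuple_gen t m n : set (set (ctuple t m n)) :=
  [set A | exists (k : 'I_t) (i : 'I_m) (j : 'I_n) (B : set R), measurable B /\
     (A = (fun S : ctuple t m n => complex.Re (S k i j)) @^-1` B \/
      A = (fun S : ctuple t m n => complex.Im (S k i j)) @^-1` B)].
Definition ctupleT t m n := g_sigma_algebraType (@ctuple_gen t m n).

Definition adj m n (M : 'M[C]_(m, n)) : 'M[C]_(n, m) := (map_mx conjc M)^T.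

Definition inner m n (psi phi : 'M[C]_(m, n)) : C := \tr (adj psi *m phi).

Definition unitary d (U : 'M[C]_d) := adj U *m U = 1%:M.

Definition unit_state m n (psi : 'M[C]_(m, n)) := inner psi psi = 1.

Definition orthonormal m r (xi : 'I_r -> 'cV[C]_m) :=
  forall k l, (adj (xi k) *m xi l) ord0 ord0 = (k == l)%:R.

Definition schmidt_decomp m n (psi : 'M[C]_(m, n)) r (c : 'I_r -> R)
  (xi : 'I_r -> 'cV[C]_m) (zeta : 'I_r -> 'cV[C]_n) :=
  [/\ forall k, 0 < c k, orthonormal xi, orthonormal zeta &
      psi = \sum_(k < r) (Num.sqrt (c k))%:C *: (xi k *m (zeta k)^T)].

Definition in_span_tensor m n r (xi : 'I_r -> 'cV[C]_m) (psi : 'M[C]_(m, n)) :=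
  exists a : 'I_r -> 'rV[C]_n, psi = \sum_(k < r) xi k *m a k.

Definition in_Tld d n t rmax (S : ctuple t d n) :=
  (forall j, unit_state (S j)) /\
  exists (i0 : 'I_t) (c : 'I_rmax -> R) (xi : 'I_rmax -> 'cV[C]_d)
         (zeta : 'I_rmax -> 'cV[C]_n),
    schmidt_decomp (S i0) c xi zeta /\ forall j, in_span_tensor xi (S j).

Definition perfectly_trained d n t (U V : 'M[C]_d) (S : ctuple t d n) :=
  forall j, ComplexField.Normc.normc (inner (S j) ((adj U *m V) *m S j)) = 1.

Definition risk d (U V : 'M[C]_d) : R :=
  1 - (d%:R + ComplexField.Normc.normc (\tr (adj U *m V)) ^+ 2) / (d%:R * (d%:R + 1)).

Definition is_haar d (mu : probability (cmxT d d) R) :=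
  [/\ {ae mu, forall U : cmxT d d, unitary U},
      forall W : 'M[C]_d, unitary W -> forall A : set (cmxT d d),
        measurable A -> mu ((fun U : cmxT d d => W *m U) @^-1` A) = mu A &
      forall W : 'M[C]_d, unitary W -> forall A : set (cmxT d d),
        measurable A -> mu ((fun U : cmxT d d => U *m W) @^-1` A) = mu A].

End QDefs.

From HB Require Import structures.
From mathcomp Require Import all_boot all_order all_algebra.
From mathcomp Require Import all_classical all_reals all_analysis.
From mathcomp Require Import complex spectral measurable_realfun lra.
Import Order.TTheory GRing.Theory Num.Theory.
Local Open Scope ring_scope.
Local Open Scope classical_set_scope.
Set Implicit Arguments.
Unset Strict Implicit.
Unset Printing Implicit Defensive.

(* Fix a training set S in T_t^ld and let P = span {xi_k}, of dimension at most
   r_max.  All inputs lie in P (x) H_R, so a unitary W acting as the identity on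
   P satisfies (U W (x) I) psi_j = (U (x) I) psi_j: the hypothesis trained for
   the target U W is the one trained for U, while U W is again Haar distributed
   by right invariance.  Averaging over the finite family W = 1_P (+) Y, with Y
   running through a unitary 1-design (signed cyclic shifts) on the orthogonal
   complement of P, gives mean_W |Tr (W^* A)|^2 <= r_max^2 + 1 for every
   unitary A: the P-block has trace of modulus at most r_max, and the 1-design
   averages the complement block to at most 1.  Inserted into
   R_U(V) = 1 - (d + |Tr (U^* V)|^2) / (d (d + 1)) this bounds the risk
   integrated over U for every S; Fubini-Tonelli, applied to the positive part
   of the risk (which equals the risk almost everywhere), integrates over S. *)

Section SignVectors.
Variable C : numClosedFieldType.
Variable n : nat.
Local Notation signs := {ffun 'I_n -> bool}.
Implicit Types (s : signs) (i j : 'I_n).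

Definition flip_at i s : signs :=
  [ffun j => if j == i then ~~ s j else s j].

Lemma flip_atK i : involutive (flip_at i).
Proof. by move=> s; apply/ffunP=> j; rewrite !ffunE; case: eqP => // _; rewrite negbK. Qed.

Lemma sign_flip_at i j s :
  (-1) ^+ flip_at i s j = (if j == i then -1 else 1) * (-1) ^+ s j :> C.
Proof. by rewrite ffunE; case: eqP => _; case: (s j); rewrite /= ?mul1r ?mulN1r ?opprK. Qed.

Lemma sum_flip_odd_eq0 i (F : signs -> C) :
  (forall s, F (flip_at i s) = - F s) -> \sum_(s : signs) F s = 0.
Proof.
move=> FN; have sumN : \sum_(s : signs) F s = - \sum_(s : signs) F s.
  rewrite {1}(reindex_inj (inv_inj (flip_atK i))) /= -sumrN.
  by apply: eq_bigr => s _; rewrite FN.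
by apply/eqP; rewrite -[_ == 0](mulrn_eq0 _ 2) mulr2n {1}sumN addNr.
Qed.

Lemma sum_sign i : \sum_(s : signs) (-1) ^+ s i = 0 :> C.
Proof.
by apply: (@sum_flip_odd_eq0 i (fun s => (-1) ^+ s i)) => s; rewrite sign_flip_at eqxx mulN1r.
Qed.

Lemma sum_sign_mul i j :
  \sum_(s : signs) (-1) ^+ s i * (-1) ^+ s j = (i == j)%:R * (2 ^ n)%:R :> C.
Proof.
have [<-|ij] := eqVneq i j.
  under eq_bigr do rewrite -signr_addb addbb.
  by rewrite sumr_const card_ffun card_bool card_ord mul1r.
rewrite mul0r; apply: (@sum_flip_odd_eq0 i (fun s => (-1) ^+ s i * (-1) ^+ s j)) => s.
by rewrite !sign_flip_at eqxx eq_sym (negbTE ij) mulN1r mul1r mulNr.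
Qed.

Lemma sum_sign_lincomb_sqr (c : C) (b : 'I_n -> C) :
  \sum_(s : signs) `|c + \sum_i (-1) ^+ s i * b i| ^+ 2
  = (2 ^ n)%:R * (`|c| ^+ 2 + \sum_i `|b i| ^+ 2).
Proof.
have expand s : `|c + \sum_i (-1) ^+ s i * b i| ^+ 2 =
    c * c^* + (\sum_j (-1) ^+ s j * (c * (b j)^*)) + \sum_i (-1) ^+ s i * (b i * c^*)
    + \sum_i \sum_j (b i * (b j)^*) * ((-1) ^+ s i * (-1) ^+ s j).
  rewrite normCK rmorphD rmorph_sum /= mulrDl !mulrDr !addrA; congr (_ + _ + _ + _).
  - by rewrite mulr_sumr; apply: eq_bigr => j _; rewrite rmorphM rmorph_sign mulrCA.
  - by rewrite mulr_suml; apply: eq_bigr => i _; rewrite mulrA.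
  - rewrite mulr_suml; apply: eq_bigr => i _; rewrite mulr_sumr; apply: eq_bigr => j _.
    by rewrite rmorphM rmorph_sign mulrACA mulrC.
under eq_bigr do rewrite expand.
rewrite !big_split /= sumr_const card_ffun card_bool card_ord.
have cross (e : 'I_n -> C) : \sum_(s : signs) \sum_j (-1) ^+ s j * e j = 0.
  by rewrite exchange_big big1 // => j _; rewrite -mulr_suml sum_sign mul0r.
rewrite !cross !addr0.
rewrite exchange_big /= normCK mulrDr mulr_natl; congr (_ + _).
rewrite mulr_sumr; apply: eq_bigr => i _; rewrite exchange_big /=.
under eq_bigr => j _ do rewrite -mulr_sumr sum_sign_mul.
rewrite (bigD1 i) //= big1 ?addr0 => [|j /negbTE ji]; last by rewrite eq_sym ji !mul0r mulr0.
by rewrite eqxx mul1r normCK mulrC.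
Qed.

End SignVectors.

Section UnitaryDesign.
Local Open Scope sesquilinear_scope.
Variable C : numClosedFieldType.

Definition hs_norm2 m n (B : 'M[C]_(m, n)) := \sum_i \sum_j `|B i j| ^+ 2.

Definition trace_1design (I : finType) m (Y : I -> 'M[C]_m) :=
  forall (c : C) (B : 'M[C]_m), \sum_i `|c + \tr ((Y i) ^t* *m B)| ^+ 2 =
     #|I|%:R * (`|c| ^+ 2 + hs_norm2 B / m%:R).

Definition shift_sign_mx n (s : {ffun 'I_n.+1 -> bool}) (a : 'I_n.+1) : 'M[C]_n.+1 :=
  \matrix_(i, j) if i == j + a then (-1) ^+ s i else 0.

Lemma shift_sign_mx_unitary n s a : @shift_sign_mx n s a \is unitarymx.
Proof.
apply/unitarymxP/mulmx1C/matrixP=> j k; rewrite !mxE (bigD1 (j + a)) //= big1 ?addr0.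
  rewrite !mxE eqxx (inj_eq (addIr a)) eq_sym rmorph_sign.
  by case: eqP => _; rewrite ?mulr0 // -signr_addb addbb.
by move=> i /negbTE ija; rewrite !mxE ija rmorph0 mul0r.
Qed.

Lemma mxtrace_shift_sign_mx n s a (B : 'M[C]_n.+1) :
  \tr ((shift_sign_mx s a) ^t* *m B) = \sum_k (-1) ^+ s k * B k (k - a).
Proof.
rewrite /mxtrace [RHS](reindex_inj (addIr a)) /=.
apply: eq_bigr => j _; rewrite addrK !mxE (bigD1 (j + a)) //= big1 ?addr0.
  by rewrite !mxE eqxx rmorph_sign.
by move=> i /negbTE ija; rewrite !mxE ija rmorph0 mul0r.
Qed.

Lemma unitary_design_exists m : exists (I : finType) (Y : I -> 'M[C]_m),
  [/\ (0 < #|I|)%N, forall i, Y i \is unitarymx & trace_1design Y].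
Proof.
case: m => [|n].
  exists unit, (fun _ => 1%:M); split=> [||c B]; rewrite ?card_unit //.
    by move=> _; apply/unitarymxP/matrixP=> [[]].
  rewrite /hs_norm2 big_ord0 mul0r addr0 mul1r (big_pred1 tt) => [|[]//].
  by rewrite /mxtrace big_ord0 addr0.
exists ({ffun 'I_n.+1 -> bool} * 'I_n.+1)%type, (fun p => shift_sign_mx p.1 p.2).
split=> [||c B].
- by rewrite card_prod card_ffun card_bool !card_ord muln_gt0 expn_gt0.
- by move=> p; apply: shift_sign_mx_unitary.
under eq_bigr do rewrite mxtrace_shift_sign_mx.
rewrite -(pair_bigA _ (fun (s : {ffun 'I_n.+1 -> bool}) (a : 'I_n.+1) =>
  `|c + \sum_k (-1) ^+ s k * B k (k - a)| ^+ 2)) /= exchange_big /=.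
under eq_bigr do rewrite sum_sign_lincomb_sqr.
rewrite -mulr_sumr big_split /= sumr_const card_ord.
rewrite card_prod card_ffun card_bool !card_ord natrM -mulrA; congr (_ * _).
rewrite mulrDr [n.+1%:R * _]mulrC mulr_natr; congr (_ + _).
rewrite mulrC divfK ?pnatr_eq0 // exchange_big /=; apply: eq_bigr => k _.
rewrite (reindex_inj (inv_inj (subKr k))) /=.
by apply: eq_bigr => l _; rewrite subKr.
Qed.

End UnitaryDesign.

Section Stabilizer.
Local Open Scope sesquilinear_scope.
Variable C : numClosedFieldType.

Lemma adj_mul_unitarymx d (U V : 'M[C]_d) :
  U \is unitarymx -> V \is unitarymx -> U ^t* *m V \is unitarymx.
Proof. by move=> UU VU; rewrite mul_unitarymx ?trmxC_unitary. Qed.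

Lemma unitarymx_row_norm2 m n (M : 'M[C]_(m, n)) i :
  M \is unitarymx -> \sum_j `|M i j| ^+ 2 = 1.
Proof.
move=> /unitarymxP/matrixP/(_ i i); rewrite !mxE eqxx mulr1n => <-.
by apply: eq_bigr => j _; rewrite !mxE normCK.
Qed.

Lemma unitarymx_entry_le1 m n (M : 'M[C]_(m, n)) i j :
  M \is unitarymx -> `|M i j| <= 1.
Proof.
move=> /(unitarymx_row_norm2 i) rowM; rewrite -(expr_le1 (n := 2)) // -rowM.
by rewrite (bigD1 j) //= lerDl sumr_ge0 // => k _; rewrite exprn_ge0.
Qed.

Lemma mxtrace_le_diag_le1 n (M : 'M[C]_n) :
  (forall i, `|M i i| <= 1) -> `|\tr M| <= n%:R.
Proof.
move=> M1; rewrite (le_trans (ler_norm_sum _ _ _)) //.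
by rewrite -[n in n%:R]card_ord -sumr_const; apply: ler_sum => i _.
Qed.

Lemma unitarymx_hs_norm2_drsubmx_le r m (M : 'M[C]_(r + m)) :
  M \is unitarymx -> hs_norm2 (drsubmx M) <= m%:R.
Proof.
move=> MU; rewrite -[m in m%:R]card_ord -sumr_const; apply: ler_sum => k _.
rewrite -(unitarymx_row_norm2 (rshift r k) MU) big_split_ord /= ler_wpDl //.
  by rewrite sumr_ge0 // => j _; rewrite exprn_ge0.
by apply: ler_sum => j _; rewrite !mxE.
Qed.

Lemma block_diag1_unitary r m (Y : 'M[C]_m) :
  Y \is unitarymx -> (block_mx 1%:M 0 0 Y : 'M[C]_(r + m)) \is unitarymx.
Proof.
move=> /unitarymxP YU; apply/unitarymxP.
rewrite tr_block_mx map_block_mx mulmx_block !trmx0 !map_mx0 trmx1 map_mx1.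
by rewrite !mulmx0 !mul0mx !mulmx1 !addr0 !add0r YU scalar_mx_block.
Qed.

Lemma mxtrace_block_diag1_adj r m (Y : 'M[C]_m) (M : 'M[C]_(r + m)) :
  \tr ((block_mx 1%:M 0 0 Y) ^t* *m M) = \tr (ulsubmx M) + \tr (Y ^t* *m drsubmx M).
Proof.
rewrite -[M in _ *m M]submxK tr_block_mx map_block_mx mulmx_block.
rewrite !trmx0 !map_mx0 trmx1 map_mx1 !mul0mx !mul1mx !addr0 !add0r.
by rewrite mxtrace_block.
Qed.

Lemma block_1design_avg_le (I : finType) r m (Y : I -> 'M[C]_m) (M : 'M[C]_(r + m)) :
  trace_1design Y -> M \is unitarymx ->
  \sum_i `|\tr ((block_mx 1%:M 0 0 (Y i)) ^t* *m M)| ^+ 2 <= #|I|%:R * ((r ^ 2)%:R + 1).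
Proof.
move=> Ydesign MU; under eq_bigr do rewrite mxtrace_block_diag1_adj.
rewrite Ydesign ler_wpM2l ?ler0n //; apply: lerD.
  rewrite natrX lerXn2r ?nnegrE ?ler0n //; apply: mxtrace_le_diag_le1 => k.
  by have := unitarymx_entry_le1 (lshift m k) (lshift m k) MU; rewrite !mxE.
have [m0|m_gt0] := posnP m.
  have m0R : m%:R = 0 :> C by rewrite m0.
  by rewrite m0R invr0 mulr0.
rewrite ler_pdivrMr ?ltr0n // mul1r.
exact: unitarymx_hs_norm2_drsubmx_le.
Qed.

Lemma orthonormal_completion d r (P : 'M[C]_(d, r)) :
  exists (r' m : nat) (E : 'M[C]_(r' + m, d)),
    [/\ (r' <= r)%N, E \is unitarymx, E ^t* \is unitarymx & dsubmx E *m P = 0].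
Proof.
pose E := schmidt_complete (P ^t*).
have EU : E \is unitarymx := schmidt_complete_unitarymx _.
exists _, _, E; split=> //.
- by rewrite (leq_trans (rank_leq_row _)).
- apply/unitarymxP; rewrite trmxCK.
  by rewrite -[LHS]mul1mx mulmxA mulmxKtV // add_rank_ortho.
transitivity (dsubmx E *m (P ^t*) ^t*); first by rewrite trmxCK.
apply/orthomx1P.
rewrite /E /schmidt_complete col_mxKd.
by rewrite (eqmx_schmidt_free (row_base_free _)) eq_row_base.
Qed.

Lemma stabilizer_design_exists d r (P : 'M[C]_(d, r)) :
  exists (I : finType) (W : I -> 'M[C]_d),
  [/\ (0 < #|I|)%N, forall i, W i \is unitarymx, forall i, W i *m P = P &
   forall A : 'M[C]_d, A \is unitarymx ->
     \sum_i `|\tr ((W i) ^t* *m A)| ^+ 2 <= #|I|%:R * ((r ^ 2)%:R + 1)].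
Proof.
have [r' [m [E [r'_le EU EtU EP]]]] := orthonormal_completion P.
have [I [Y [I_gt0 YU Ydesign]]] := unitary_design_exists C m.
pose D i : 'M[C]_(r' + m) := block_mx 1%:M 0 0 (Y i).
have EtE : E ^t* *m E = 1%:M by have /unitarymxP := EtU; rewrite trmxCK.
exists I, (fun i => E ^t* *m D i *m E); split=> // [i|i|A AU].
- by rewrite !mul_unitarymx // block_diag1_unitary.
- have EP_col : E *m P = col_mx (usubmx E *m P) 0 by rewrite -EP -mul_col_mx vsubmxK.
  rewrite -!mulmxA EP_col mul_block_col !mulmx0 !mul0mx !addr0 mul1mx -EP_col.
  by rewrite mulmxA EtE mul1mx.
have conj_trace i :
    \tr ((E ^t* *m D i *m E) ^t* *m A) = \tr ((D i) ^t* *m (E *m A *m E ^t*)).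
  by rewrite !trmx_mul !map_mxM trmxCK -!mulmxA mxtrace_mulC -!mulmxA.
under eq_bigr do rewrite conj_trace.
apply: le_trans (block_1design_avg_le (M := E *m A *m E ^t*) Ydesign _) _.
  by rewrite !mul_unitarymx // trmxC_unitary.
by rewrite ler_wpM2l ?ler0n // lerD2r ler_nat leq_exp2r.
Qed.

End Stabilizer.

(* Typeclass resolution does not find the [Filter] instance of [ae] on the
   generated sigma-algebras [cmxT] and [ctupleT], so [filterS] is packaged here. *)
Lemma aeS d (T : measurableType d) (R : realType) (mu : {measure set T -> \bar R})
    (P Q : T -> Prop) :
  (forall x, P x -> Q x) -> {ae mu, forall x, P x} -> {ae mu, forall x, Q x}.
Proof. exact: (@filterS _ _ (ae_filter_ringOfSetsType mu)). Qed.

Section AverageIntegrals.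
Local Open Scope ereal_scope.
Context d (T : measurableType d) (R : realType).

Lemma le_integral_probability_ae (P : probability T R) (c : R) (g : T -> \bar R) :
  measurable_fun setT g -> (forall x, 0 <= g x) -> {ae P, forall x, c%:E <= g x} ->
  c%:E <= \int[P]_x g x.
Proof.
move=> mg g_ge0 cg; have [c_le0|c_gt0] := leP c 0%R.
  by apply: le_trans (integral_ge0 _ _) => //; rewrite lee_fin.
rewrite -[c%:E]mule1 -(probability_setT P) -integral_cst //.
apply: ae_ge0_le_integral => //; first by move=> x _; rewrite lee_fin ltW.
by apply: filterS cg => x cgx _.
Qed.

Lemma le_integral_invariant_avg (P : probability T R) (I : finType) (phi : I -> T -> T)
    (c : R) (g : T -> \bar R) :
  (0 < #|I|)%N -> (forall i, measurable_fun setT (phi i)) ->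
  (forall i A, measurable A -> P (phi i @^-1` A) = P A) ->
  measurable_fun setT g -> (forall x, 0 <= g x) ->
  {ae P, forall x, (#|I|%:R * c)%:E <= \sum_i g (phi i x)} ->
  c%:E <= \int[P]_x g x.
Proof.
move=> I_gt0 mphi phiP mg g_ge0 avg_ge.
have int_phi i : \int[P]_x g (phi i x) = \int[P]_x g x.
  transitivity (\int[pushforward P (phi i)]_x g x).
    by rewrite ge0_integral_pushforward // preimage_setT.
  by apply: eq_measure_integral => A mA _; apply: phiP.
have : (#|I|%:R * c)%:E <= \int[P]_x g x *+ #|I|.
  have <- : \sum_(i : I) \int[P]_x g (phi i x) = \int[P]_x g x *+ #|I|.
    by under eq_bigr do rewrite int_phi; rewrite sumr_const.
  rewrite -ge0_integral_sum //; last by move=> i; apply: measurableT_comp.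
  apply: le_integral_probability_ae => //.
    by apply: emeasurable_sum => i; apply: measurableT_comp.
  by move=> x; rewrite sume_ge0.
have : 0 <= \int[P]_x g x by apply: integral_ge0.
case: (\int[P]_x g x) => [k| |] //= _; last by rewrite leey.
by rewrite -EFin_natmul !lee_fin -(mulr_natl k) ler_pM2l // ltr0n.
Qed.
End AverageIntegrals.

Section IteratedIntegral.
Local Open Scope ereal_scope.
Context d1 d2 (T1 : measurableType d1) (T2 : measurableType d2) (R : realType).
Variables (mu : {measure set T1 -> \bar R}) (nu : {sigma_finite_measure set T2 -> \bar R}).

Lemma measurable_fun_iterated_integral (f : T1 * T2 -> R) :
  measurable_fun setT f -> measurable_fun setT (fun x => \int[nu]_y (f (x, y))%:E).
Proof.
move=> mf; have mfE : measurable_fun setT (EFin \o f) by apply/measurable_EFinP.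
have mpos := measurable_fun_fubini_tonelli_F (m2 := nu) _
  (measurable_funepos mfE) (fun _ => funepos_ge0 _ _).
have mneg := measurable_fun_fubini_tonelli_F (m2 := nu) _
  (measurable_funeneg mfE) (fun _ => funeneg_ge0 _ _).
rewrite /fubini_F in mpos mneg.
apply: (eq_measurable_fun _ _ (emeasurable_funB mpos mneg)) => x _.
rewrite [X in _ = X]integralE; congr (_ - _);
  by apply: eq_integral => y _; rewrite ?funeposE ?funenegE.
Qed.

Lemma iterated_integral_maxr0 (f : T1 * T2 -> R) :
  measurable_fun setT f -> {ae mu, forall x, {ae nu, forall y, 0 <= f (x, y)}%R} ->
  \int[mu]_x \int[nu]_y (f (x, y))%:E =
  \int[mu]_x \int[nu]_y (Num.max (f (x, y)) 0)%:E.
Proof.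
move=> mf f_ge0; have mfmax : measurable_fun setT (fun p => Num.max (f p) 0%R).
  exact: measurable_maxr.
apply: ae_eq_integral => //.
- exact: measurable_fun_iterated_integral.
- exact: (measurable_fun_iterated_integral mfmax).
apply: filterS f_ge0 => x fx_ge0 _.
apply: ae_eq_integral => //.
- exact/measurable_EFinP/measurable_fun_pair2.
- exact/measurable_EFinP/(measurable_fun_pair2 x mfmax).
by apply: filterS fx_ge0 => y fxy_ge0 _; rewrite max_l.
Qed.

End IteratedIntegral.

Section ComplexMatrices.
Local Open Scope sesquilinear_scope.
Variable R : realType.
Local Notation C := R[i].
Local Notation normc := ComplexField.Normc.normc.

Lemma adj_trmxC m n (M : 'M[C]_(m, n)) : adj M = M ^t*.
Proof. by apply/matrixP=> i j; rewrite !mxE. Qed.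

Lemma unitaryE d (U : 'M[C]_d) : unitary U <-> U \is unitarymx.
Proof.
rewrite /unitary adj_trmxC -trmxC_unitary.
by split=> [UU|/unitarymxP]; [apply/unitarymxP|]; rewrite trmxCK.
Qed.

Lemma real_complex_normc (z : C) : (normc z)%:C%C = `|z|.
Proof. by []. Qed.

Lemma normc_ge0 (z : C) : 0 <= normc z.
Proof. by rewrite -ler0c real_complex_normc. Qed.

Lemma normc_mxtrace_le d (A : 'M[C]_d) : A \is unitarymx -> normc (\tr A) <= d%:R.
Proof.
move=> AU; rewrite -lecR real_complex_normc rmorph_nat.
by apply: mxtrace_le_diag_le1 => i; apply: unitarymx_entry_le1.
Qed.

Lemma risk_ge0 d (U V : 'M[C]_d) : (0 < d)%N -> unitary U -> unitary V -> 0 <= risk U V.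
Proof.
move=> d_gt0 /unitaryE UU /unitaryE VU.
have trUV : normc (\tr (adj U *m V)) ^+ 2 <= d%:R ^+ 2.
  rewrite lerXn2r ?nnegrE ?ler0n ?normc_ge0 // adj_trmxC.
  exact: normc_mxtrace_le (adj_mul_unitarymx UU VU).
have d_gt0R : 0 < d%:R :> R by rewrite ltr0n.
rewrite /risk subr_ge0 ler_pdivrMr ?mulr_gt0 ?addr_gt0 //.
by rewrite mul1r mulrDr mulr1 addrC lerD2r -expr2.
Qed.

Lemma sum_risk_ge d r (I : finType) (W : I -> 'M[C]_d) (U V : 'M[C]_d) :
  (forall A : 'M[C]_d, A \is unitarymx ->
     \sum_i `|\tr ((W i) ^t* *m A)| ^+ 2 <= #|I|%:R * ((r ^ 2)%:R + 1)) ->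
  unitary U -> unitary V ->
  #|I|%:R * (1 - ((r ^ 2)%:R + d%:R + 1) / (d%:R * (d%:R + 1))) <=
  \sum_i risk (U *m W i) V.
Proof.
move=> Wavg /unitaryE UU /unitaryE VU.
pose n i := normc (\tr (adj (U *m W i) *m V)).
have n_sum : \sum_i n i ^+ 2 <= #|I|%:R * ((r ^ 2)%:R + 1).
  rewrite -lecR rmorph_sum rmorphM rmorphD /= !rmorph_nat rmorph1.
  under eq_bigr do
    rewrite rmorphXn /= real_complex_normc adj_trmxC trmx_mul map_mxM -mulmxA.
  exact: Wavg (adj_mul_unitarymx UU VU).
rewrite /risk big_split /= sumr_const sumrN -mulr_suml big_split /= sumr_const.
have cardI : #|(xpredT : pred I)| = #|I| by apply: eq_card.
rewrite -mulr_natr mulrBr mulr1 lerD2l lerN2 mulrA cardI.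
rewrite ler_wpM2r ?invr_ge0 ?mulr_ge0 ?ler0n ?addr_ge0 // -mulr_natr mul1r.
move: n_sum; rewrite -/(n _); set N := (#|I|%:R : R); set S := \sum_i _.
lra.
Qed.

Lemma in_Tld_stabilizer d n t r (S : ctuple R t d n) : in_Tld r S ->
  exists (I : finType) (W : I -> 'M[C]_d),
  [/\ (0 < #|I|)%N, forall i, unitary (W i), forall i j, W i *m S j = S j &
   forall U V : 'M[C]_d, unitary U -> unitary V ->
     #|I|%:R * (1 - ((r ^ 2)%:R + d%:R + 1) / (d%:R * (d%:R + 1))) <=
     \sum_i risk (U *m W i) V].
Proof.
move=> [_ [_ [_ [xi [_ [_ S_span]]]]]].
pose P : 'M[C]_(d, r) := \matrix_(a, k) xi k a 0.
have [I [W [I_gt0 WU WP Wavg]]] := stabilizer_design_exists P.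
exists I, W; split=> // [i|i j|U V]; first exact/unitaryE.
  have Wxi k : W i *m xi k = xi k.
    have xiP : xi k = col k P by apply/matrixP=> a b; rewrite !mxE (ord1 b).
    by rewrite xiP !colE mulmxA WP.
  have [a ->] := S_span j; rewrite mulmx_sumr; apply: eq_bigr => k _.
  by rewrite mulmxA Wxi.
exact: sum_risk_ge.
Qed.

Lemma measurable_Re_entry m n (i : 'I_m) (j : 'I_n) :
  measurable_fun [set: cmxT R m n] (fun M : cmxT R m n => complex.Re (M i j)).
Proof.
move=> _ B mB; rewrite setTI; apply: sub_sigma_algebra.
by exists i, j, B; split => //; left.
Qed.

Lemma measurable_Im_entry m n (i : 'I_m) (j : 'I_n) :
  measurable_fun [set: cmxT R m n] (fun M : cmxT R m n => complex.Im (M i j)).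
Proof.
move=> _ B mB; rewrite setTI; apply: sub_sigma_algebra.
by exists i, j, B; split => //; right.
Qed.

Lemma measurable_mulmxr d (W : 'M[C]_d) :
  measurable_fun [set: cmxT R d d] (fun U : cmxT R d d => (U *m W : cmxT R d d)).
Proof.
apply: measurability => //= _ [A [i [j [B [mB defA]]]] <-]; rewrite setTI.
have mRe : measurable_fun [set: cmxT R d d] (fun U => complex.Re ((U *m W) i j)).
  apply: (eq_measurable_fun (fun U : cmxT R d d => \sum_k
      (complex.Re (U i k) * complex.Re (W k j) - complex.Im (U i k) * complex.Im (W k j)))).
    by move=> U _; rewrite mxE (raddf_sum (@complex.Re R : Rcomplex R -> R));
       apply: eq_bigr => k _; case: (U i k) (W k j) => [? ?] [? ?].
  apply: measurable_sum => k; apply: measurable_funB; apply: measurable_funM => //;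
    by [apply: measurable_Re_entry | apply: measurable_Im_entry].
have mIm : measurable_fun [set: cmxT R d d] (fun U => complex.Im ((U *m W) i j)).
  apply: (eq_measurable_fun (fun U : cmxT R d d => \sum_k
      (complex.Re (U i k) * complex.Im (W k j) + complex.Im (U i k) * complex.Re (W k j)))).
    by move=> U _; rewrite mxE (raddf_sum (@complex.Im R : Rcomplex R -> R));
       apply: eq_bigr => k _; case: (U i k) (W k j) => [? ?] [? ?].
  apply: measurable_sum => k; apply: measurable_funD; apply: measurable_funM => //;
    by [apply: measurable_Re_entry | apply: measurable_Im_entry].
by case: defA => ->; rewrite -[X in measurable X]setTI; [apply: mRe | apply: mIm].
Qed.

End ComplexMatrices.

Theorem mainTheorem3 (R : realType) (d dR t rmax : nat) (hd : (0 < d)%N)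
  (mu : probability (cmxT R d d) R) (hmu : is_haar mu)
  (nu : probability (ctupleT R t d dR) R)
  (hnu : {ae nu, forall S : ctupleT R t d dR, in_Tld rmax S})
  (V : ctuple R t d dR -> ctuple R t d dR -> 'M[R[i]]_d)
  (hV : forall (U : 'M[R[i]]_d) (S : ctuple R t d dR),
      unitary U -> in_Tld rmax S ->
      unitary (V S [ffun j => U *m S j]) /\
      perfectly_trained U (V S [ffun j => U *m S j]) S)
  (hmeas : measurable_fun [set: (cmxT R d d * ctupleT R t d dR)%type]
     (fun p : cmxT R d d * ctupleT R t d dR =>
        risk p.1 (V p.2 [ffun j => p.1 *m p.2 j]))) :
  ((1 - ((rmax ^ 2)%:R + d%:R + 1) / (d%:R * (d%:R + 1)))%:E <=
   \int[mu]_U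
     \int[nu]_S (risk U (V S [ffun j => U *m S j]))%:E)%E.
Proof.
have [mu_unitary _ mu_invariant] := hmu.
set f := fun p : cmxT R d d * ctupleT R t d dR => _ in hmeas.
pose g p := (Num.max (f p) 0)%:E.
have mg : measurable_fun setT g by apply/measurable_EFinP/measurable_maxr.
have g_ge0 p : (0 <= g p)%E by rewrite lee_fin le_max lexx orbT.
have f_ge0 : {ae mu, forall U, {ae nu, forall S, 0 <= f (U, S)}}.
  apply: aeS mu_unitary => U UU; apply: aeS hnu => S SP.
  by have [VU _] := hV U S UU SP; apply: risk_ge0.
rewrite (iterated_integral_maxr0 hmeas f_ge0) (fubini_tonelli g) //.
apply: le_integral_probability_ae.
- exact: measurable_fun_fubini_tonelli_G.
- by move=> S; apply: integral_ge0.
apply: aeS hnu => S SP.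
have [I [W [I_gt0 WU WS Wrisk]]] := in_Tld_stabilizer SP.
apply: (le_integral_invariant_avg (phi := fun i (U : cmxT R d d) => U *m W i)) => //.
- by move=> i; apply: measurable_mulmxr.
- by move=> i A mA; apply: mu_invariant.
- exact: measurable_fun_pair1.
apply: aeS mu_unitary => U UU.
have [VU _] := hV U S UU SP.
rewrite /g sumEFin lee_fin; apply: le_trans (Wrisk U _ UU VU) _; apply: ler_sum => i _.
have WS_ffun : [ffun j => U *m W i *m S j] = [ffun j => U *m S j].
  by apply/ffunP => j; rewrite !ffunE -mulmxA WS.
by rewrite /f /= WS_ffun le_max lexx.
Qed.
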